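(* Let $Q\in\mathbb{R}^{n\times n}$ be symmetric positive definite, let $g\in\mathbb{R}^n$, let $\sigma\in(0,1/2]$ and $tol\ge 0$, and let the initial active set $A\subseteq\{1,\dots,n\}$ be arbitrary. Then the generic random active set method (described in the context) stops after finitely many iterations with probability $1$.
   Context: Consider the problem $\min_{x\in\mathbb{R}^n}\tfrac12 x^TQx+g^Tx$ subject to $x\ge 0$. For index sets $A,B\subseteq\{1,\dots,n\}$, $x_A$ denotes the subvector of $x$ indexed by $A$ and $Q_{A,B}$ the submatrix with rows in $A$ and columns in $B$. For a finite index set $S$ and a vector $p=(p_j)_{j\in S}$ of probabilities, $\mathrm{rand}(S,p)$ denotes a random subset of $S$ containing each $j\in S$ independently with probability $p_j$. Generic random active set method (RAS): Step 0: given $\sigma\in(0,1/2]$, an initial active set $A$, $I=\{1,\dots,n\}\setminus A$, and $tol\ge 0$. Step 1: compute $x_I=-Q_{I,I}^{-1}g_I$ and $s_A=Q_{A,I}x_I+g_A$; set $Im=\{i\in I: x_i\le 0\}$, $Am=\{j\in A: s_j<-tol\}$, $Ip=I\setminus Im$, $Ap=A\setminus Am$. Step 2: if $Im\cup Am=\emptyset$, stop. Otherwise choose (possibly depending on the whole history) vectors $p_{Im}\in\mathbb{R}^{|Im|}$, $p_{Am}\in\mathbb{R}^{|Am|}$ with every entry in $[\sigma,1-\sigma]$, and let $Imc=\mathrm{rand}(Im,p_{Im})$, $Imf=Im\setminus Imc$, $Amc=\mathrm{rand}(Am,p_{Am})$, $Amf=Am\setminus Amc$ (fresh independent randomness at each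 iteration). Step 3: set $I\leftarrow Ip\cup Imf\cup Amc$, $A\leftarrow Ap\cup Amf\cup Imc$, and return to Step 1. *)

From HB Require Import structures.
From mathcomp Require Import all_boot all_order all_algebra.
From mathcomp Require Import all_classical all_reals all_analysis.
Set Implicit Arguments. Unset Strict Implicit. Unset Printing Implicit Defensive.
Import Order.TTheory GRing.Theory Num.Theory.
Local Open Scope ring_scope.

(* For an index set I, the
   k-th element (k : 'I_#|I|) of I in increasing order is enum_val k; the
   submatrix Q_{I,I} and subvector g_I are taken w.r.t. this enumeration. *)

Section RAS.
Variables (R : realType) (n : nat).
Implicit Types (Q : 'M[R]_n) (g : 'cV[R]_n) (A : {set 'I_n}).

Definition subQ Q (I : {set 'I_n}) : 'M[R]_#|I| :=
  \matrix_(i, j) Q (enum_val i) (enum_val j).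

Definition xI Q g A : 'cV[R]_#|~: A| :=
  - (invmx (subQ Q (~: A)) *m \col_i g (enum_val i) 0).

Definition sA Q g A (j : 'I_n) : R :=
  \sum_(k < #|~: A|) Q j (enum_val k) * xI Q g A k 0 + g j 0.

Definition Imset Q g A : {set 'I_n} :=
  [set (enum_val k : 'I_n) | k in [pred k : 'I_#|~: A| | xI Q g A k 0 <= 0]].

Definition Amset Q g (tol : R) A : {set 'I_n} :=
  [set j in A | sA Q g A j < - tol].

Definition ras_stop Q g tol A : bool := Imset Q g A :|: Amset Q g tol A == finset.set0 :> {set 'I_n}.

(* Probability that one iteration (Steps 2-3) moves the active set from A to
   A', when the coin of index j (j in Im \cup Am) has success probability p j.
   The flipped indices S = Imc \cup Amc are exactly the symmetric difference
   of A and A' (Imc joins A, Amc leaves A), so the transition has probability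
   prod_{j in S} p_j * prod_{j in (Im \cup Am) \ S} (1 - p_j) if S is
   contained in Im \cup Am, and 0 otherwise. *)
Definition ras_trans Q g tol (p : 'I_n -> R) A (A' : {set 'I_n}) : R :=
  let D := Imset Q g A :|: Amset Q g tol A in
  let S := (A :\: A') :|: (A' :\: A) in
  if S \subset D then \prod_(j in D) (if j \in S then p j else 1 - p j) else 0.

(* Strategy: the probability vector chosen at an iteration may depend on the
   whole history, i.e. the list of previous active sets (which determines all
   previous random outcomes) and the current active set.
   ras_surv strat k h A = probability that, starting with past history h and
   current active set A, the method has NOT stopped within the next k
   iterations (i.e. none of the current and the next k active sets passes the
   stopping test). *)
Fixpoint ras_surv Q g tol (strat : seq {set 'I_n} -> {set 'I_n} -> 'I_n -> R)
  (k : nat) (h : seq {set 'I_n}) A : R :=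
  if ras_stop Q g tol A then 0 else
  match k with
  | 0 => 1
  | k'.+1 => \sum_(A' : {set 'I_n})
       ras_trans Q g tol (strat h A) A A' * ras_surv Q g tol strat k' (rcons h A) A'
  end.

End RAS.

From HB Require Import structures.
From mathcomp Require Import all_boot all_order all_algebra.
From mathcomp Require Import all_classical all_reals all_analysis.
From mathcomp Require Import ring lra zify.
Set Implicit Arguments. Unset Strict Implicit. Unset Printing Implicit Defensive.
Import Order.TTheory GRing.Theory Num.Theory.
Local Open Scope ring_scope.

(* Every step allowed by Step 2 (flipping any subset of Im and Am) is taken
   with probability at least sigma^n.  So it suffices to find, from every
   active set, a chain of allowed steps ending at a stopping set: some N then
   bounds all these chains, each block of N iterations stops with probability
   at least sigma^(n N), and the probability of running k iterations decays
   geometrically.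
   The chain is a primal active set method carrying a point y >= 0 that
   vanishes on the active set.  While Im is nonempty, a ratio test moves y
   towards the subspace minimizer x and adds a blocking index of Im; when Im is
   empty, x itself is such a point and releasing an index of Am strictly
   decreases the subspace minimum.  The objective never increases along the
   chain, and the number of active sets whose subspace minimum lies below it,
   together with the size of the active set, is a termination measure. *)

Section QuadraticForm.
Variables (R : realFieldType) (n : nat) (Q : 'M[R]_n).

Definition qform (v : 'cV[R]_n) : R := (v^T *m Q *m v) 0 0.

Lemma qformZ a v : qform (a *: v) = a ^+ 2 * qform v.
Proof. by rewrite /qform -scalemxAr [(a *: v)^T]linearZ -!scalemxAl !mxE mulrA -expr2. Qed.

Lemma qform_ge0 v : (forall u, u != 0 -> 0 < qform u) -> 0 <= qform v.
Proof.
move=> Qpd; have [->|v0] := eqVneq v 0; last exact/ltW/Qpd.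
by rewrite /qform mulmx0 mxE.
Qed.

Hypothesis Qsym : Q^T = Q.

Lemma qformD u v : qform (u + v) = qform u + 2 * (v^T *m Q *m u) 0 0 + qform v.
Proof.
have uQv : u^T *m Q *m v = v^T *m Q *m u.
  rewrite [LHS]mx11_scalar [RHS]mx11_scalar; congr _%:M.
  transitivity ((u^T *m Q *m v)^T 0 0); first by rewrite [RHS]mxE.
  by rewrite !trmx_mul trmxK Qsym mulmxA.
by rewrite /qform [(u + v)^T]linearD /= !mulmxDl !mulmxDr uQv !mxE; ring.
Qed.

Variable g : 'cV[R]_n.

Definition qobj (z : 'cV[R]_n) : R := qform z / 2 + (g^T *m z) 0 0.

Lemma qobjD x d :
  qobj (x + d) = qobj x + (d^T *m (Q *m x + g)) 0 0 + qform d / 2.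
Proof.
have dg : (d^T *m g) 0 0 = (g^T *m d) 0 0.
  by rewrite -[d^T *m g]trmxK trmx_mul trmxK [LHS]mxE.
rewrite /qobj qformD !mulmxDr mulmxA.
rewrite [(_ + d^T *m g) 0 0]mxE [(g^T *m x + _) 0 0]mxE dg; lra.
Qed.

End QuadraticForm.

Section RatioStep.
Variables (R : realFieldType) (a b : R).
Hypotheses (a_ge0 : 0 <= a) (b_le0 : b <= 0).

Lemma ratio_ge0 : 0 <= a / (a - b).
Proof. by rewrite divr_ge0 // subr_ge0 (le_trans b_le0). Qed.

Lemma ratio_le1 : a / (a - b) <= 1.
Proof.
have [->|ab] := eqVneq (a - b) 0; first by rewrite invr0 mulr0 ler01.
have ab_gt0 : 0 < a - b by rewrite lt_neqAle eq_sym ab subr_ge0 (le_trans b_le0).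
by rewrite ler_pdivrMr // mul1r lerDl oppr_ge0.
Qed.

Lemma ratio_gt0 : 0 < a -> 0 < a / (a - b).
Proof. by move=> a_gt0; rewrite divr_gt0 // subr_gt0 (le_lt_trans b_le0). Qed.

Lemma ratio_root : a + a / (a - b) * (b - a) = 0.
Proof.
have [ab|ab] := eqVneq (a - b) 0; last by rewrite -[b - a]opprB mulrN divfK // subrr.
by rewrite ab invr0 mulr0 mul0r addr0; move: a_ge0 b_le0; lra.
Qed.

Lemma ratio_below_ge0 t : t <= a / (a - b) -> 0 <= a + t * (b - a).
Proof.
by move=> t_le; rewrite -ratio_root lerD2l ler_wnM2r // subr_le0 (le_trans b_le0).
Qed.

End RatioStep.

Lemma segment_ge0 (R : realFieldType) (a b t : R) :
  0 <= a -> 0 <= b -> 0 <= t <= 1 -> 0 <= a + t * (b - a).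
Proof. by move=> a0 b0 /andP[t0 t1]; nra. Qed.

(* The pair (a, n - c) in lexicographic order, encoded as a * n.+1 + (n - c). *)
Lemma lexn_ltl a a' c c' n : (a' < a)%N -> (a' * n.+1 + (n - c') < a * n.+1 + (n - c))%N.
Proof. by move=> lt_a; nia. Qed.

Lemma lexn_ltr a a' c n : (a' <= a)%N -> (c < n)%N ->
  (a' * n.+1 + (n - c.+1) < a * n.+1 + (n - c))%N.
Proof. by move=> le_a lt_c; nia. Qed.

Section ColumnEntries.
Variables (R : ringType) (m : nat).
Implicit Types (u v : 'cV[R]_m).

Lemma sub_cVE u v i : (u - v) i 0 = u i 0 - v i 0.
Proof. by rewrite !mxE. Qed.

Lemma segmentE u v t i : (u + t *: (v - u)) i 0 = u i 0 + t * (v i 0 - u i 0).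
Proof. by rewrite !mxE. Qed.

Lemma dot_cVE u v : (u^T *m v) 0 0 = \sum_i u i 0 * v i 0.
Proof. by rewrite mxE; apply: eq_bigr => i _; rewrite mxE. Qed.

End ColumnEntries.

Definition symdiff (T : finType) (A B : {set T}) := (A :\: B) :|: (B :\: A).

Lemma symdiffK (T : finType) (A : {set T}) : involutive (symdiff A).
Proof. by move=> S; apply/setP => i; rewrite !inE; case: (i \in A); case: (i \in S). Qed.

Lemma sum_coin_subsets (R : comRingType) (T : finType) (D : {set T}) (p : T -> R) :
  \sum_(S : {set T}) (if S \subset D then
     \prod_(j in D) (if j \in S then p j else 1 - p j) else 0) = 1.
Proof.
(* Expand the product of the coin sums c true j + c false j = 1, where coins
   outside D always come up false. *)
pose c (b : bool) j := if j \in D then (if b then p j else 1 - p j) else (b == false)%:R.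
transitivity (\prod_j (c true j + c false j)); last first.
  by rewrite big1 // => j _; rewrite /c; case: (j \in D); rewrite /= ?add0r // addrC subrK.
rewrite bigA_distr; apply: eq_big => // S _.
rewrite [RHS](bigID [in D]) /=; case: ifPn => [SD | /fintype.subsetPn[j jS jD]].
  rewrite [X in _ * X]big1 ?mulr1 => [|j jD]; last first.
    by rewrite /c (negbTE jD); case: ifPn => // /(fintype.subsetP SD); rewrite (negbTE jD).
  by apply: eq_bigr => j jD; rewrite /c jD; case: (j \in S).
by rewrite [X in _ * X](bigD1 j) //= /c jS (negbTE jD) mul0r mulr0.
Qed.

Section ActiveSetMethod.
Variables (R : realType) (n : nat) (Q : 'M[R]_n) (g : 'cV[R]_n) (tol : R).
Implicit Types (B : {set 'I_n}) (y z : 'cV[R]_n).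

(* The columns of sel B are the unit vectors e_i, i in I = ~: B: sel B *m w
   extends w : 'cV_#|I| by zeros on B, and (sel B)^T *m z restricts z to I. *)
Definition sel B : 'M[R]_(n, #|~: B|) := mxsub id enum_val 1%:M.

Lemma mulmx_sel m B (M : 'M[R]_(m, n)) : M *m sel B = mxsub id enum_val M.
Proof. by rewrite mulmx_colsub mulmx1. Qed.

Lemma selT_mulmx m B (M : 'M[R]_(n, m)) : (sel B)^T *m M = mxsub enum_val id M.
Proof. by rewrite trmx_mxsub trmx1 mul_rowsub_mx mul1mx. Qed.

Lemma selT_sel B : (sel B)^T *m sel B = 1%:M.
Proof. by rewrite selT_mulmx; apply/matrixP => k l; rewrite !mxE (inj_eq enum_val_inj). Qed.

Lemma subQE B : subQ Q (~: B) = (sel B)^T *m Q *m sel B.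
Proof. by rewrite mulmx_sel selT_mulmx; apply/matrixP => k l; rewrite !mxE. Qed.

Lemma sel_mulmx_ev B (w : 'cV[R]_#|~: B|) k : (sel B *m w) (enum_val k) 0 = w k 0.
Proof. by rewrite -[w in RHS]mul1mx -selT_sel -mulmxA selT_mulmx [RHS]mxE. Qed.

Lemma sel_mulmx_on B (w : 'cV[R]_#|~: B|) i : i \in B -> (sel B *m w) i 0 = 0.
Proof.
move=> iB; rewrite mxE big1 // => k _; rewrite !mxE.
have /negbTE -> : i != enum_val k by apply: contraTneq iB => ->; have := enum_valP k; rewrite inE.
exact: mul0r.
Qed.

Lemma sel_selT_supp B z : (forall i, i \in B -> z i 0 = 0) -> sel B *m ((sel B)^T *m z) = z.
Proof.
move=> zB; apply/matrixP => i j; rewrite (ord1 j).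
have [iB|iC] := boolP (i \in B); first by rewrite sel_mulmx_on // zB.
have {}iC : i \in ~: B by rewrite inE.
have ik := enum_rankK_in iC iC.
by rewrite -{1}ik sel_mulmx_ev selT_mulmx mxE ik.
Qed.

(* The x of Step 1 extended by zeros on A = B, and its gradient Q x + g,
   whose restriction to A is s_A. *)
Definition xfull B : 'cV[R]_n := sel B *m xI Q g B.

Definition sfull B : 'cV[R]_n := Q *m xfull B + g.

Lemma xfull_on B i : i \in B -> xfull B i 0 = 0.
Proof. exact: sel_mulmx_on. Qed.

Lemma Imset_xfull B i : (i \in Imset Q g B) = (i \notin B) && (xfull B i 0 <= 0).
Proof.
apply/imsetP/andP => [[k xk_le0 ->] | [iB xi_le0]].
  by rewrite /xfull sel_mulmx_ev; have := enum_valP k; rewrite inE => ->.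
have {}iB : i \in ~: B by rewrite inE.
have ik := enum_rankK_in iB iB.
by exists (enum_rank_in iB i); rewrite // inE /= -sel_mulmx_ev ik.
Qed.

Lemma sA_sfull B j : sA Q g B j = sfull B j 0.
Proof.
rewrite /sA /sfull /xfull mulmxA mulmx_sel [in RHS]mxE [in RHS]mxE.
by under [in RHS]eq_bigr do rewrite mxE.
Qed.

Hypothesis Qpd : forall v, v != 0 -> 0 < qform Q v.

Lemma subQ_unit B : subQ Q (~: B) \in unitmx.
Proof.
rewrite unitmxE unitfE; apply/negP => /det0P[v v0]; rewrite subQE => vM.
have Pv0 : sel B *m v^T != 0.
  apply: contraNneq v0 => Pv.
  by rewrite -[v]trmxK -[v^T]mul1mx -selT_sel -mulmxA Pv mulmx0 trmx0.
have := Qpd Pv0; rewrite /qform trmx_mul trmxK !mulmxA.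
by rewrite -(mulmxA v) -(mulmxA v) vM mul0mx mxE ltxx.
Qed.

Lemma selT_sfull B : (sel B)^T *m sfull B = 0.
Proof.
have gI : \col_i g (enum_val i) 0 = (sel B)^T *m g.
  by apply/matrixP => k j; rewrite selT_mulmx !mxE (ord1 j).
rewrite /sfull /xfull /xI gI mulmxDr !mulmxA -subQE mulmxN !mulmxA.
by rewrite mulmxV ?subQ_unit // mul1mx addNr.
Qed.

Lemma sfull_off B i : i \notin B -> sfull B i 0 = 0.
Proof.
move=> iB; have iC : i \in ~: B by rewrite inE.
have ik := enum_rankK_in iC iC.
by move/matrixP: (selT_sfull B) => /(_ (enum_rank_in iC i) 0); rewrite selT_mulmx !mxE ik.
Qed.

Hypothesis Qsym : Q^T = Q.

Lemma qobj_xfull B z : (forall i, i \in B -> z i 0 = 0) ->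
  qobj Q g z = qobj Q g (xfull B) + qform Q (z - xfull B) / 2.
Proof.
move=> zB; have dB : forall i, i \in B -> (z - xfull B) i 0 = 0.
  by move=> i iB; rewrite sub_cVE zB // xfull_on // subrr.
rewrite -{1}(subrK (xfull B) z) addrC qobjD // -/(sfull B).
by rewrite -(sel_selT_supp dB) trmx_mul -mulmxA selT_sfull mulmx0 mxE addr0.
Qed.


Definition feasible B y := (forall i, 0 <= y i 0) /\ (forall i, i \in B -> y i 0 = 0).

Lemma qobj_xfull_le B y : (forall i, i \in B -> y i 0 = 0) ->
  qobj Q g (xfull B) <= qobj Q g y.
Proof. by move=> yB; rewrite (qobj_xfull yB) lerDl divr_ge0 ?qform_ge0. Qed.

Lemma qobj_segment B y t : (forall i, i \in B -> y i 0 = 0) ->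
  qobj Q g (y + t *: (xfull B - y)) =
  qobj Q g (xfull B) + (1 - t) ^+ 2 * qform Q (y - xfull B) / 2.
Proof.
move=> yB; set x := xfull B.
have zB i : i \in B -> (y + t *: (x - y)) i 0 = 0.
  by move=> iB; rewrite segmentE yB // xfull_on // subrr mulr0 addr0.
rewrite (qobj_xfull zB) -/x -qformZ; congr (_ + qform Q _ / 2).
by rewrite scalerBl scale1r !scalerBr opprB addrAC.
Qed.

Lemma ratio_test B y i0 : feasible B y -> i0 \in Imset Q g B ->
  exists2 k, k \in Imset Q g B &
  exists y', [/\ feasible (k |: B) y', qobj Q g y' <= qobj Q g y &
    (forall i, i \in Imset Q g B -> 0 < y i 0) -> y != xfull B ->
    qobj Q g y' < qobj Q g y].
Proof.
move=> [y_ge0 yB] i0Im; set x := xfull B.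
(* y + r i *: (x - y) vanishes at i; the least such step keeps y nonnegative. *)
pose r i := y i 0 / (y i 0 - x i 0).
have x_le0 i : i \in Imset Q g B -> x i 0 <= 0 by rewrite Imset_xfull => /andP[].
have [k kIm r_min] := arg_minP r i0Im; set t := r k.
have t_ge0 : 0 <= t by apply/ratio_ge0/x_le0.
have t_le1 : t <= 1 by apply/ratio_le1/x_le0.
exists k => //; exists (y + t *: (x - y)); split.
- split=> i; rewrite segmentE.
    have [iB|iB] := boolP (i \in B); first by rewrite yB // xfull_on // subrr mulr0 addr0.
    have [x_i|x_i] := leP (x i 0) 0; last by apply: segment_ge0; rewrite ?t_ge0 // ltW.
    have iIm : i \in Imset Q g B by rewrite Imset_xfull iB x_i.
    exact/ratio_below_ge0/r_min.
  rewrite in_setU1 => /orP[/eqP-> | iB]; first exact/ratio_root/x_le0.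
  by rewrite yB // xfull_on // subrr mulr0 addr0.
- rewrite (qobj_segment t yB) (qobj_xfull yB) -/x lerD2l ler_pM2r // ler_piMl ?qform_ge0 //.
  by rewrite expr_le1 ?subr_ge0 // lerBlDr lerDl.
- move=> y_pos yx; rewrite (qobj_segment t yB) (qobj_xfull yB) -/x ltrD2l ltr_pM2r //.
  have D_gt0 : 0 < qform Q (y - x) by apply: Qpd; rewrite subr_eq0.
  have t_gt0 : 0 < t by apply/ratio_gt0/y_pos/kIm/x_le0.
  by rewrite gtr_pMl // expr_lt1 // ?subr_ge0 // ltrBlDr ltrDl.
Qed.

Lemma xfull_gt0 B i : (forall l, l \notin Imset Q g B) -> i \notin B -> 0 < xfull B i 0.
Proof.
by move=> Im0 iB; rewrite ltNge; apply: contraNN (Im0 i) => x_le0; rewrite Imset_xfull iB.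
Qed.

Lemma xfull_feasible B : (forall l, l \notin Imset Q g B) -> feasible B (xfull B).
Proof.
move=> Im0; split=> [i|i /xfull_on //].
by have [/xfull_on ->//|iB] := boolP (i \in B); exact/ltW/xfull_gt0.
Qed.

Lemma qform_release B j : j \in B ->
  qform Q (xfull (B :\ j) - xfull B) = xfull (B :\ j) j 0 * - sfull B j 0.
Proof.
move=> jB; have jB' : j \notin B :\ j by rewrite !inE eqxx.
have Qd : Q *m (xfull (B :\ j) - xfull B) = sfull (B :\ j) - sfull B.
  by rewrite /sfull mulmxBr opprD addrACA subrr addr0.
rewrite /qform -mulmxA Qd dot_cVE (bigD1 j) //= big1 ?addr0 => [|i ij].
  by rewrite !sub_cVE (xfull_on jB) (sfull_off jB') subr0 sub0r.
have [iB|iB] := boolP (i \in B).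
  by rewrite sub_cVE !xfull_on ?subrr ?mul0r // !inE ij.
rewrite [X in _ * X]sub_cVE !sfull_off ?subrr ?mulr0 //.
by rewrite !inE negb_and iB orbT.
Qed.

Hypothesis tol_ge0 : 0 <= tol.

Lemma xfull_release_neq B j : j \in Amset Q g tol B -> xfull (B :\ j) != xfull B.
Proof.
rewrite inE => /andP[_ s_lt]; apply/eqP => E.
have s0 : sfull B j 0 = 0 by rewrite /sfull -E sfull_off // !inE eqxx.
by move: s_lt; rewrite sA_sfull s0 oppr_gt0 ltNge tol_ge0.
Qed.

Lemma xfull_release_gt0 B j : j \in Amset Q g tol B -> 0 < xfull (B :\ j) j 0.
Proof.
move=> jAm; have /andP[jB s_lt] : (j \in B) && (sA Q g B j < - tol) by rewrite inE in jAm.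
have := xfull_release_neq jAm; rewrite -subr_eq0 => /Qpd.
rewrite qform_release // pmulr_lgt0 // -sA_sfull oppr_gt0.
by apply: lt_le_trans s_lt _; rewrite oppr_le0.
Qed.

Lemma qobj_release_lt B j : j \in Amset Q g tol B ->
  qobj Q g (xfull (B :\ j)) < qobj Q g (xfull B).
Proof.
move=> jAm; have xB i : i \in B :\ j -> xfull B i 0 = 0 by rewrite inE => /andP[_ /xfull_on].
rewrite [X in _ < X](qobj_xfull xB) ltrDl divr_gt0 // Qpd //.
by rewrite subr_eq0 eq_sym xfull_release_neq.
Qed.

Definition ras_move B B' := symdiff B B' \subset Imset Q g B :|: Amset Q g tol B.

Fixpoint ras_reach k B : bool := ras_stop Q g tol B ||
  if k is k'.+1 then [exists B', ras_move B B' && ras_reach k' B'] else false.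

Lemma ras_reach_move k B B' : ras_move B B' -> ras_reach k B' -> ras_reach k.+1 B.
Proof. by move=> mv reach'; apply/orP; right; apply/existsP; exists B'; rewrite mv. Qed.

Lemma ras_reachS k B : ras_reach k B -> ras_reach k.+1 B.
Proof.
elim: k B => [|k IH] B /=; first by rewrite orbF => ->.
case/orP=> [-> // | /existsP[B' /andP[mv reach']]].
exact: ras_reach_move mv (IH _ reach').
Qed.

Lemma ras_reach_le k k' B : (k <= k')%N -> ras_reach k B -> ras_reach k' B.
Proof. by move/subnK <-; elim: (k' - k)%N => // d IH /IH/ras_reachS. Qed.

Lemma ras_move_add B k : k \in Imset Q g B -> ras_move B (k |: B).
Proof.
move=> kIm; apply/fintype.subsetP => i; rewrite /symdiff.
have [-> _|ik] := eqVneq i k; first by rewrite finset.in_setU kIm.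
by rewrite !inE (negbTE ik); case: (i \in B).
Qed.

Lemma ras_move_release B j : j \in Amset Q g tol B -> ras_move B (B :\ j).
Proof.
move=> jAm; apply/fintype.subsetP => i; rewrite /symdiff.
have [-> _|ij] := eqVneq i j; first by rewrite finset.in_setU jAm orbT.
by rewrite !inE ij; case: (i \in B).
Qed.

(* The ratio test restarts from xfull B, which is feasible for B :\ j; it is
   strict because xfull (B :\ j) j > 0 keeps j out of Im (B :\ j). *)
Lemma release_step B j : (forall l, l \notin Imset Q g B) -> j \in Amset Q g tol B ->
  exists B' y', [/\ feasible B' y', qobj Q g y' < qobj Q g (xfull B)
    & forall k, ras_reach k B' -> ras_reach k.+2 B].
Proof.
move=> Im0 jAm; set B1 := B :\ j.
have Fx : feasible B1 (xfull B).
  have [x_ge0 _] := xfull_feasible Im0.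
  by split=> // i; rewrite inE => /andP[_ /xfull_on].
case: (pickP [in Imset Q g B1]) => [i0 i0Im | Im1]; last first.
  exists B1, (xfull B1); split; first exact/xfull_feasible/(fun l => negbT (Im1 l)).
    exact: qobj_release_lt.
  by move=> k /(ras_reach_move (ras_move_release jAm))/ras_reachS.
have [k kIm [y' [Fy' _ y'_lt]]] := ratio_test Fx i0Im.
exists (k |: B1), y'; split=> //.
  apply: y'_lt; last by rewrite eq_sym xfull_release_neq.
  move=> i; rewrite Imset_xfull => /andP[iB1 x1_le0]; apply: xfull_gt0 => //.
  have ij : i != j by apply: contraTneq x1_le0 => ->; rewrite -ltNge xfull_release_gt0.
  by move: iB1; rewrite !inE ij.
by move=> k' /(ras_reach_move (ras_move_add kIm))/(ras_reach_move (ras_move_release jAm)).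
Qed.

Definition nbelow (v : R) : nat := #|[set C : {set 'I_n} | qobj Q g (xfull C) <= v]|.

Lemma nbelow_le v w : v <= w -> (nbelow v <= nbelow w)%N.
Proof.
move=> vw; apply/subset_leq_card/fintype.subsetP => C; rewrite !inE => Cv.
exact: le_trans vw.
Qed.

Lemma nbelow_lt v w B : v < qobj Q g (xfull B) -> qobj Q g (xfull B) <= w ->
  (nbelow v < nbelow w)%N.
Proof.
move=> vB Bw; apply/proper_card/properP; split; last by exists B; rewrite !inE // -ltNge.
apply/fintype.subsetP => C; rewrite !inE => Cv.
exact: le_trans Cv (le_trans (ltW vB) Bw).
Qed.

Lemma ras_reach_feasible B y : feasible B y -> exists k, ras_reach k B.
Proof.
move=> Fy; have [w] := ubnP (nbelow (qobj Q g y) * n.+1 + (n - #|B|)).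
elim: w B y Fy => // w IH B y Fy; rewrite ltnS => pot.
have [stop|nstop] := boolP (ras_stop Q g tol B); first by exists 0%N; rewrite /= stop.
case: (pickP [in Imset Q g B]) => [i0 i0Im | Im0].
  have [k kIm [y' [Fy' y'_le _]]] := ratio_test Fy i0Im.
  have kB : k \notin B by move: kIm; rewrite Imset_xfull => /andP[].
  suff [k' reach'] : exists k', ras_reach k' (k |: B).
    by exists k'.+1; exact: ras_reach_move (ras_move_add kIm) reach'.
  apply: (IH _ _ Fy'); apply: leq_trans pot; rewrite cardsU1 kB lexn_ltr ?(nbelow_le y'_le) //.
  by have := max_card (k |: B); rewrite cardsU1 kB card_ord.
have [j jAm] : exists j, j \in Amset Q g tol B.
  by move: nstop => /set0Pn[j]; rewrite finset.in_setU Im0 => jAm; exists j.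
have Im0' l : l \notin Imset Q g B by rewrite Im0.
have [B' [y' [Fy' y'_lt reach_B]]] := release_step Im0' jAm.
suff [k' reach'] : exists k', ras_reach k' B' by exists k'.+2; exact: reach_B.
apply: (IH _ _ Fy'); apply: leq_trans pot; rewrite lexn_ltl //.
exact: nbelow_lt y'_lt (qobj_xfull_le Fy.2).
Qed.

Lemma ras_reach_uniform : exists N, forall B, ras_reach N B.
Proof.
have /fin_all_exists[N reachN] : forall B, exists k, ras_reach k B.
  by move=> B; apply: (@ras_reach_feasible B 0); split=> *; rewrite mxE.
by exists (\max_B N B)%N => B; apply: ras_reach_le (reachN B); exact: leq_bigmax.
Qed.

End ActiveSetMethod.

Section Transition.
Variables (R : realType) (n : nat) (Q : 'M[R]_n) (g : 'cV[R]_n) (tol : R).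
Implicit Types (p : 'I_n -> R) (A : {set 'I_n}).

Lemma ras_trans_ge0 p A A' : (forall i, 0 <= p i <= 1) -> 0 <= ras_trans Q g tol p A A'.
Proof.
move=> p01; rewrite /ras_trans /=; case: ifP => // _.
by apply: prodr_ge0 => i _; case: ifP => _; have /andP[] := p01 i; rewrite // subr_ge0.
Qed.

(* The flipped coins of a step from A to A' are those of symdiff A A'. *)
Lemma ras_trans_sum1 p A : \sum_A' ras_trans Q g tol p A A' = 1.
Proof.
rewrite (reindex_inj (inv_inj (symdiffK A))) /=.
rewrite -[RHS](sum_coin_subsets (Imset Q g A :|: Amset Q g tol A) p).
by apply: eq_bigr => S _; rewrite /ras_trans /= -/(symdiff A _) symdiffK.
Qed.

Lemma ras_trans_move sigma p A A' : 0 <= sigma <= 1 ->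
  (forall i, sigma <= p i <= 1 - sigma) -> ras_move Q g tol A A' ->
  sigma ^+ n <= ras_trans Q g tol p A A'.
Proof.
move=> /andP[s_ge0 s_le1] p_bnd; rewrite /ras_move /symdiff /ras_trans /= => ->.
apply: le_trans (_ : sigma ^+ #|Imset Q g A :|: Amset Q g tol A| <= _).
  by rewrite ler_wiXn2l // -[n in (_ <= n)%N]card_ord max_card.
rewrite -prodr_const; apply: ler_prod => i _; rewrite s_ge0.
by case: ifP => _; have /andP[] := p_bnd i; rewrite // lerBrDr -lerBrDl.
Qed.

End Transition.

Local Open Scope classical_set_scope.
Local Open Scope ring_scope.

Section Survival.
Variables (R : realType) (n : nat) (Q : 'M[R]_n) (g : 'cV[R]_n) (tol sigma : R).
Variable strat : seq {set 'I_n} -> {set 'I_n} -> 'I_n -> R.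
Hypotheses (sigma_gt0 : 0 < sigma) (sigma_le : sigma <= 1 / 2).
Hypothesis strat_bnd : forall h A i, sigma <= strat h A i <= 1 - sigma.

Let surv := ras_surv Q g tol strat.
Let delta := sigma ^+ n.

Lemma strat01 h A i : 0 <= strat h A i <= 1.
Proof. by move: sigma_gt0 (strat_bnd h A i) => s_gt0 /andP[lo hi]; apply/andP; split; lra. Qed.

Lemma delta01 : 0 < delta <= 1.
Proof. by move: sigma_gt0 sigma_le => s_gt0 s_le; rewrite exprn_gt0 // exprn_ile1 ?ltW //; lra. Qed.

Lemma ras_surv_stop k h A : ras_stop Q g tol A -> surv k h A = 0.
Proof. by rewrite /surv; case: k => [|k] /= ->. Qed.

Lemma ras_surv_ge0 k h A : 0 <= surv k h A.
Proof.
elim: k h A => [|k IH] h A; rewrite /surv /=; case: ifP => // _.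
by apply: sumr_ge0 => A' _; rewrite mulr_ge0 ?ras_trans_ge0 //; exact: strat01.
Qed.

Lemma ras_surv_le1 k h A : surv k h A <= 1.
Proof.
elim: k h A => [|k IH] h A; rewrite /surv /=; case: ifP => // _.
rewrite -(ras_trans_sum1 Q g tol (strat h A) A); apply: ler_sum => A' _.
by rewrite ler_piMr ?ras_trans_ge0 //; exact: strat01.
Qed.

Lemma ras_survS k h A : surv k.+1 h A <= surv k h A.
Proof.
elim: k h A => [|k IH] h A.
  by have := ras_surv_le1 1 h A; rewrite /surv /=; case: ifP.
rewrite /surv /=; case: ifP => // _; apply: ler_sum => A' _.
by rewrite ler_wpM2l ?ras_trans_ge0 ?IH //; exact: strat01.
Qed.

Lemma ras_surv_le k k' h A : (k <= k')%N -> surv k' h A <= surv k h A.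
Proof. by move/subnK <-; elim: (k' - k)%N => // d IH; exact: le_trans (ras_survS _ _ _) IH. Qed.

Lemma ras_surv_reach j m M h A : 0 <= M -> (forall h' A', surv m h' A' <= M) ->
  ras_reach Q g tol j A -> surv (j + m) h A <= (1 - delta ^+ j) * M.
Proof.
move=> M_ge0 survM; have [d_gt0 d_le1] := andP delta01.
have cM_ge0 i : 0 <= (1 - delta ^+ i) * M by rewrite mulr_ge0 // subr_ge0 exprn_ile1 // ltW.
elim: j h A => [|j IH] h A /=.
  by rewrite orbF => stop; rewrite ras_surv_stop // expr0 subrr mul0r.
case/orP=> [stop | /existsP[B' /andP[mv reachB']]]; first by rewrite ras_surv_stop.
rewrite addSn /surv /=; case: ifP => // _; rewrite (bigD1 B') //=.
set t := ras_trans Q g tol (strat h A) A.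
have t_ge0 A' : 0 <= t A' by apply: ras_trans_ge0; exact: strat01.
have t_sum : t B' + \sum_(A' | A' != B') t A' = 1.
  by rewrite -(ras_trans_sum1 Q g tol (strat h A) A) [RHS](bigD1 B').
have t_lb : delta <= t B'.
  apply: ras_trans_move mv => //; move: sigma_gt0 sigma_le => s_gt0 s_le; apply/andP; split; lra.
have surv_B' : t B' * ras_surv Q g tol strat (j + m) (rcons h A) B'
    <= t B' * ((1 - delta ^+ j) * M).
  by rewrite ler_wpM2l // IH.
have surv_rest : \sum_(A' | A' != B') t A' * ras_surv Q g tol strat (j + m) (rcons h A) A'
    <= (\sum_(A' | A' != B') t A') * M.
  rewrite big_distrl; apply: ler_sum => A' _; rewrite ler_wpM2l //.
  exact: le_trans (ras_surv_le _ _ (leq_addl j m)) (survM _ _).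
have dM_ge0 : 0 <= delta ^+ j * M by rewrite mulr_ge0 // exprn_ge0 // ltW.
rewrite exprS; nra.
Qed.

Variable N : nat.
Hypothesis reachN : forall B, ras_reach Q g tol N B.

Lemma ras_surv_geom i h A : surv (i * N) h A <= (1 - delta ^+ N) ^+ i.
Proof.
elim: i h A => [|i IH] h A; first by rewrite mul0n expr0 ras_surv_le1.
rewrite mulSn exprS; apply: ras_surv_reach (reachN A) => //.
by rewrite exprn_ge0 // subr_ge0 exprn_ile1 //; case/andP: delta01 => /ltW.
Qed.

Lemma ras_surv_cvg0 A0 : (fun k => surv k [::] A0) @ \oo --> (0 : R^o).
Proof.
have [d_gt0 d_le1] := andP delta01.
have c_ge0 : 0 <= 1 - delta ^+ N by rewrite subr_ge0 exprn_ile1 // ltW.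
have c_lt1 : `|1 - delta ^+ N| < 1 by rewrite ger0_norm // ltrBlDr ltrDl exprn_gt0.
apply/cvgrPdist_le => eps eps_gt0.
have [i0 _ ci0] := (cvgrPdist_le _ _).1 (cvg_expr c_lt1) eps eps_gt0.
exists (i0 * N)%N => // k /= k_ge.
rewrite sub0r normrN ger0_norm ?ras_surv_ge0 //.
apply: le_trans (ras_surv_le _ _ k_ge) (le_trans (ras_surv_geom i0 _ _) _).
by have := ci0 i0 (leqnn i0); rewrite /= sub0r normrN ger0_norm // exprn_ge0.
Qed.

End Survival.

Theorem theorem2p3 (R : realType) (n : nat) (Q : 'M[R]_n) (g : 'cV[R]_n)
  (sigma tol : R) (A0 : {set 'I_n})
  (strat : seq {set 'I_n} -> {set 'I_n} -> 'I_n -> R) :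
  Q^T = Q ->
  (forall v : 'cV[R]_n, v != 0 -> 0 < (v^T *m Q *m v) 0 0) ->
  0 < sigma <= 1 / 2 ->
  0 <= tol ->
  (forall h A i, sigma <= strat h A i <= 1 - sigma) ->
  (fun k : nat => ras_surv Q g tol strat k [::] A0) @ \oo --> (0 : R^o).
Proof.
move=> Qsym Qpd /andP[sigma_gt0 sigma_le] tol_ge0 strat_bnd.
have [N reachN] := ras_reach_uniform g Qpd Qsym tol_ge0.
exact (ras_surv_cvg0 sigma_gt0 sigma_le strat_bnd reachN A0).
Qed.
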